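(* Let $n,m$ be integers with either $m=n-1\geq 0$ or $m=n-2\geq 0$, and let $H(s)=Q_{nm}(s)/P_{nm}(s)$ be the $(n,m)$ Padé approximant of $e^{-s}$. Then $H$ yields a maximally flat approximation of order $n$ of the ideal (unit-amplitude) lowpass characteristic: $$|H(j\omega)|^2=1+c\,\omega^{2n}+O(\omega^{2n+2})\quad(\omega\to0)$$ for some constant $c\neq0$.
   Context: The $(n,m)$ Padé approximant of $e^{-s}$ is $Q_{nm}(s)/P_{nm}(s)$ with $Q_{nm}(s)=\frac{n!}{(n+m)!}\sum_{k=0}^{m}\binom{m}{k}\frac{(n+k)!}{n!}(-s)^{m-k}$ and $P_{nm}(s)=\frac{m!}{(n+m)!}\sum_{k=0}^{n}\binom{n}{k}\frac{(m+k)!}{m!}s^{n-k}$ (equivalently, the unique rational function with $\deg Q\le m$, $\deg P\le n$, $P(0)=1$, $P(s)e^{-s}-Q(s)=O(s^{n+m+1})$). An amplitude approximation of unit amplitude is maximally flat of order $k$ if, apart from the constant term $1$, the Taylor expansion of $|H(j\omega)|^2$ about $\omega=0$ begins with the term in $\omega^{2k}$. *)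

From Stdlib Require Import Reals Lra Lia Arith Factorial.
Open Scope R_scope.

Definition Cx : Type := (R * R)%type.
Definition Cadd (z w : Cx) : Cx := (fst z + fst w, snd z + snd w).
Definition Cmul (z w : Cx) : Cx :=
  (fst z * fst w - snd z * snd w, fst z * snd w + snd z * fst w).
Definition Cscale (a : R) (z : Cx) : Cx := (a * fst z, a * snd z).
Definition Cneg (z : Cx) : Cx := (- fst z, - snd z).
Fixpoint Cpow (z : Cx) (k : nat) : Cx :=
  match k with O => (1, 0) | S k' => Cmul z (Cpow z k') end.
Definition Cnormsq (z : Cx) : R := fst z * fst z + snd z * snd z.

Fixpoint Csum (f : nat -> Cx) (N : nat) : Cx :=
  match N with O => f O | S N' => Cadd (Csum f N') (f N) end.

Definition Qnm (n m : nat) (s : Cx) : Cx :=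
  Cscale (INR (fact n) / INR (fact (n + m)))
    (Csum (fun k => Cscale (C m k * (INR (fact (n + k)) / INR (fact n)))
                           (Cpow (Cneg s) (m - k))) m).

Definition Pnm (n m : nat) (s : Cx) : Cx :=
  Cscale (INR (fact m) / INR (fact (n + m)))
    (Csum (fun k => Cscale (C n k * (INR (fact (m + k)) / INR (fact m)))
                           (Cpow s (n - k))) n).

Definition jw (w : R) : Cx := (0, w).

Definition pade_amp2 (n m : nat) (w : R) : R :=
  Cnormsq (Qnm n m (jw w)) / Cnormsq (Pnm n m (jw w)).

Definition maximally_flat_of_order (f : R -> R) (k : nat) : Prop :=
  exists c : R, c <> 0 /\
    exists K delta : R, 0 < delta /\
      forall w : R, Rabs w < delta ->
        Rabs (f w - 1 - c * w ^ (2 * k)) <= K * Rabs w ^ (2 * k + 2).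

From Stdlib Require Import Reals.
From HB Require Import structures.
From mathcomp Require Import all_boot all_order all_algebra.
From mathcomp Require Import Rstruct complex.
From mathcomp.algebra_tactics Require Import ring lra.
From mathcomp Require Import zify.
Import Order.TTheory GRing.Theory Num.Theory.

Set Implicit Arguments.
Unset Strict Implicit.
Unset Printing Implicit Defensive.

Local Close Scope R_scope.
Local Open Scope ring_scope.

(* The Pade relation P(s) e^-s - Q(s) = O(s^(n+m+1)), multiplied by its reflection
   P(-s) e^s - Q(-s) = O(s^(n+m+1)), gives P(s)P(-s) - Q(s)Q(-s) = O(s^(n+m+1)).
   This difference is even and of degree at most 2n, so when n <= m + 2 it is the
   single monomial c s^(2n), with c = (-1)^n a_n^2 <> 0 for the leading coefficient
   a_n of P.  On the imaginary axis P(s)P(-s) = |P(jw)|^2, hence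
   |H(jw)|^2 = 1 - c (-w^2)^n / |P(jw)|^2 with |P(jw)|^2 = 1 + O(w^2). *)

Lemma sum_alternating_binomial (K : comNzRingType) (n m j : nat) : (j <= n + m)%N ->
  \sum_(i < j.+1) (-1 : K) ^+ i * 'C(j, i)%:R * 'C(n + m - i, m)%:R
  = 'C(n + m - j, n)%:R.
Proof.
elim: j n => [|j IH] n hj.
  by rewrite big_ord1 expr0 bin0 !mul1r subn0 -bin_sub ?leq_addl // addnK.
case: n hj => [|n] hj.
  rewrite add0n in hj *; rewrite big_ord_recl expr0 !bin0 subn0 binn !mul1r.
  rewrite big1 ?addr0 // => i _.
  by rewrite (@bin_small (m - bump 0 i)) ?mulr0 //; rewrite /bump; lia.
rewrite big_ord_recl /= expr0 bin0 subn0 !mul1r.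
under eq_bigr => i _ do rewrite /bump /= add1n binS natrD mulrDr mulrDl.
rewrite big_split /=.
have lower : \sum_(i < j.+1) (-1 : K) ^+ i.+1 * 'C(j, i)%:R * 'C(n.+1 + m - i.+1, m)%:R
    = - 'C(n + m - j, n)%:R.
  rewrite -(IH n); last by lia.
  rewrite -sumrN; apply: eq_bigr => i _.
  by rewrite exprS (_ : (n.+1 + m - i.+1 = n + m - i)%N) ?mulN1r ?mulNr //; lia.
have upper : 'C(n.+1 + m, m)%:R
    + \sum_(i < j.+1) (-1 : K) ^+ i.+1 * 'C(j, i.+1)%:R * 'C(n.+1 + m - i.+1, m)%:R
    = 'C(n.+1 + m - j, n.+1)%:R.
  rewrite -(IH n.+1); last by lia.
  have -> : \sum_(i < j.+1) (-1 : K) ^+ i * 'C(j, i)%:R * 'C(n.+1 + m - i, m)%:R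
      = \sum_(i < j.+2) (-1 : K) ^+ i * 'C(j, i)%:R * 'C(n.+1 + m - i, m)%:R.
    by rewrite [RHS]big_ord_recr /= bin_small // mulr0 mul0r addr0.
  rewrite [RHS]big_ord_recl /= expr0 bin0 subn0 !mul1r.
  by congr (_ + _); apply: eq_bigr => i _; rewrite /bump /= add1n.
rewrite addrA upper lower.
rewrite (_ : (n.+1 + m - j = (n + m - j).+1)%N); last by lia.
by rewrite addSn subSS binS natrD addrK.
Qed.

Section ReflectedPolynomial.
Variable K : comNzRingType.
Implicit Types p : {poly K}.

Lemma coef_comp_polyNX p i : (p \Po - 'X)`_i = (-1) ^+ i * p`_i.
Proof.
elim/poly_ind: p i => [|p c IH] i; first by rewrite comp_poly0 !coef0 mulr0.
rewrite comp_poly_MXaddC !coefD !coefC mulrN coefN coefMX coefMX mulrDr.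
case: i => [|i] /=; first by rewrite oppr0 add0r expr0 !mul1r add0r.
by rewrite IH exprS mulN1r mulNr !addr0 mulr0 addr0.
Qed.

Lemma comp_polyNXK p : (p \Po - 'X) \Po - 'X = p.
Proof.
by apply/polyP => i; rewrite !coef_comp_polyNX mulrA -expr2 exprAC sqrrN !expr1n mul1r.
Qed.

(* For real [p], [sqnorm_poly p] evaluated at [jw] is [|p(jw)|^2]. *)
Definition sqnorm_poly p := p * (p \Po - 'X).

Lemma sqnorm_poly_even p : sqnorm_poly p \Po - 'X = sqnorm_poly p.
Proof. by rewrite comp_polyM comp_polyNXK mulrC. Qed.

Lemma coef0_sqnorm_poly p : (sqnorm_poly p)`_0 = p`_0 ^+ 2.
Proof. by rewrite coefM big_ord1 coef_comp_polyNX expr0 mul1r expr2. Qed.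

Lemma horner_comp_polyNX p x : (p \Po - 'X).[x] = p.[- x].
Proof. by rewrite horner_comp hornerN hornerX. Qed.

End ReflectedPolynomial.

Lemma size_comp_polyNX (D : idomainType) (p : {poly D}) : size (p \Po - 'X) = size p.
Proof. by rewrite size_comp_poly2 // size_opp size_polyX. Qed.

Lemma map_comp_polyNX (K1 K2 : comNzRingType) (f : {rmorphism K1 -> K2}) (p : {poly K1}) :
  map_poly f (p \Po - 'X) = map_poly f p \Po - 'X.
Proof. by rewrite map_comp_poly rmorphN /= map_polyX. Qed.

Section DivisibilityByXn.
Variable F : fieldType.
Implicit Types p : {poly F}.

Lemma dvdp_XnP k p : reflect (forall i, (i < k)%N -> p`_i = 0) ('X^k %| p).
Proof.
rewrite /dvdp -Pdiv.IdomainMonic.take_poly_modp; apply: (iffP eqP) => [hp i hik | hp].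
  by move: (coef_take_poly k p i); rewrite hik hp coef0.
by apply/polyP => i; rewrite coef_take_poly coef0; case: ltnP => // /hp.
Qed.

Lemma dvdp_Xn_comp_polyNX k p : 'X^k %| p -> 'X^k %| p \Po - 'X.
Proof.
by move=> /dvdp_XnP hp; apply/dvdp_XnP => i hik; rewrite coef_comp_polyNX hp ?mulr0.
Qed.

End DivisibilityByXn.

Section EvenPolynomial.
Variable F : numFieldType.
Implicit Types p : {poly F}.

Lemma coef_odd_even_poly p i : p \Po - 'X = p -> odd i -> p`_i = 0.
Proof.
move=> hp hi; have := congr1 (fun q : {poly F} => q`_i) hp.
rewrite /= coef_comp_polyNX -signr_odd hi mulN1r => {}hp.
by apply/eqP; rewrite -eqNr hp.
Qed.

Lemma even_poly_comp_Xn2 p : p \Po - 'X = p -> even_poly p \Po 'X^2 = p.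
Proof.
move=> hp; rewrite -[RHS]poly_even_odd.
suff -> : odd_poly p = 0 by rewrite comp_poly0 mul0r addr0.
by apply/polyP => i; rewrite coef_odd_poly coef0 (coef_odd_even_poly hp) //= odd_double.
Qed.

Lemma even_dvdp_Xn_monomial k p : p \Po - 'X = p -> (size p <= (2 * k).+1)%N ->
  'X^((2 * k).-1) %| p -> p = p`_(2 * k) *: 'X^(2 * k).
Proof.
move=> hp hsize /dvdp_XnP hlow; apply/polyP => i; rewrite coefZ coefXn.
have [->|hik] := eqVneq i (2 * k)%N; first by rewrite mulr1.
rewrite mulr0; have [hi|hi] := ltnP (2 * k) i.
  by rewrite nth_default // (leq_trans hsize hi).
have [hi'|hi'] := ltnP i (2 * k).-1; first exact: hlow.
apply: (coef_odd_even_poly hp).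
by rewrite (_ : i = (2 * k.-1).+1) /= ?odd_mul //; lia.
Qed.

End EvenPolynomial.

Section PadeApproximant.
Variable F : numFieldType.

Lemma natr_fact_neq0 k : k`!%:R != 0 :> F.
Proof. by rewrite pnatr_eq0 -lt0n fact_gt0. Qed.

Lemma natr_bin_neq0 n k : (k <= n)%N -> 'C(n, k)%:R != 0 :> F.
Proof. by move=> hk; rewrite pnatr_eq0 -lt0n bin_gt0. Qed.

Lemma signr_subn j i : (i <= j)%N -> (-1) ^+ (j - i) = (-1) ^+ j * (-1) ^+ i :> F.
Proof.
by move=> hij; rewrite -{2}(subnK hij) exprD -mulrA -expr2 exprAC sqrrN !expr1n mulr1.
Qed.

(* The coefficient of s^i in P_{nm}, i.e. C(n,i) (n+m-i)! / (n+m)!, written so that it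
   vanishes for n < i <= n + m; Q_{nm}(s) is P_{mn}(-s). *)
Definition pade_coef n m i : F := 'C(n + m - i, m)%:R / ('C(n + m, n)%:R * i`!%:R).

Definition padeP n m : {poly F} := \poly_(i < n.+1) pade_coef n m i.

Definition padeQ n m : {poly F} := padeP m n \Po - 'X.

Definition exp_trunc N : {poly F} := \poly_(i < N.+1) (i`!%:R)^-1.

Lemma coef_padeP n m i : (i <= n + m)%N -> (padeP n m)`_i = pade_coef n m i.
Proof.
move=> hi; rewrite coef_poly; case: ltnP => // hn.
by rewrite /pade_coef bin_small ?mul0r //; lia.
Qed.

Lemma pade_coef_neq0 n m i : (i <= n)%N -> pade_coef n m i != 0.
Proof.
move=> hi; rewrite /pade_coef mulf_neq0 ?natr_bin_neq0 ?invr_eq0 ?mulf_neq0 //;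
  rewrite ?natr_fact_neq0 ?natr_bin_neq0 //; lia.
Qed.

Lemma pade_coef0 n m : pade_coef n m 0 = 1.
Proof.
rewrite /pade_coef subn0 fact0 mulr1 -[in X in _ / X]bin_sub ?leq_addr // addKn.
by rewrite divff // natr_bin_neq0 // leq_addl.
Qed.

Lemma size_padeP n m : size (padeP n m) = n.+1.
Proof. by rewrite size_poly_eq // pade_coef_neq0. Qed.

Lemma dvdp_padeP_exp_trunc n m :
  'X^(n + m + 1) %| padeP n m * (exp_trunc (n + m) \Po - 'X) - padeQ n m.
Proof.
apply/dvdp_XnP => j hj; rewrite coefB coefM coef_comp_polyNX coef_padeP; last by lia.
apply/eqP; rewrite subr_eq0; apply/eqP.
transitivity (\sum_(i < j.+1) (-1 : F) ^+ j / ('C(n + m, n)%:R * j`!%:R) *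
    ((-1) ^+ i * 'C(j, i)%:R * 'C(n + m - i, m)%:R)).
  apply: eq_bigr => -[i /= hij] _; rewrite ltnS in hij.
  rewrite coef_padeP ?coef_comp_polyNX ?coef_poly; [|lia].
  rewrite ifT; last by lia.
  rewrite signr_subn // /pade_coef -(bin_fact hij) !natrM.
  by field; rewrite !natr_fact_neq0 !natr_bin_neq0 ?leq_addr.
rewrite -mulr_sumr sum_alternating_binomial; last by lia.
rewrite /pade_coef (addnC m n) (_ : 'C(n + m, m) = 'C(n + m, n)); last first.
  by rewrite -[RHS]bin_sub ?leq_addr // addKn.
by rewrite mulrAC -mulrA.
Qed.

Lemma dvdp_exp_trunc_mulNX N : 'X^(N + 1) %| (exp_trunc N \Po - 'X) * exp_trunc N - 1.
Proof.
apply/dvdp_XnP => i hi; rewrite coefB coefM coef1.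
(* the case m = 0 of the alternating binomial identity *)
transitivity (\sum_(k < i.+1) (i`!%:R)^-1 *
    ((-1 : F) ^+ k * 'C(i, k)%:R * 'C(i + 0 - k, 0)%:R) - (i == 0%N)%:R).
  congr (_ - _); apply: eq_bigr => -[k /= hk] _; rewrite ltnS in hk.
  rewrite coef_comp_polyNX !coef_poly !ifT; [|lia|lia].
  rewrite bin0 mulr1 -(bin_fact hk) !natrM.
  by field; rewrite !natr_fact_neq0 natr_bin_neq0.
rewrite -mulr_sumr sum_alternating_binomial ?addn0 ?subnn //.
by case: i {hi} => [|i]; rewrite ?bin0 ?bin0n ?fact0 ?invr1 ?mulr1 ?mulr0 subrr.
Qed.

Definition pade_defect n m := sqnorm_poly (padeP n m) - sqnorm_poly (padeQ n m).

Lemma dvdp_pade_defect n m : 'X^(n + m + 1) %| pade_defect n m.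
Proof.
set P := padeP n m; set Q := padeQ n m; set E := exp_trunc (n + m).
have hPQ := dvdp_padeP_exp_trunc n m; rewrite -/P -/Q -/E in hPQ.
have hPQ' := dvdp_Xn_comp_polyNX hPQ.
rewrite comp_polyB comp_polyM comp_polyNXK [_ * E]mulrC in hPQ'.
have hE := dvdp_exp_trunc_mulNX (n + m); rewrite -/E in hE.
rewrite /pade_defect /sqnorm_poly.
have -> : P * (P \Po - 'X) - Q * (Q \Po - 'X) = (P * (E \Po - 'X) - Q) * (E * (P \Po - 'X))
    + Q * (E * (P \Po - 'X) - (Q \Po - 'X)) - P * (P \Po - 'X) * ((E \Po - 'X) * E - 1).
  by ring.
by apply: dvdp_sub; [apply: dvdp_add|]; [apply: dvdp_mulr | apply: dvdp_mull..].
Qed.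

Lemma size_sqnorm_padeP n m : size (sqnorm_poly (padeP n m)) = (2 * n).+1.
Proof.
rewrite size_mul ?size_comp_polyNX ?size_padeP; first by rewrite mul2n -addnn addnS.
  by rewrite -size_poly_eq0 size_padeP.
by rewrite -size_poly_eq0 size_comp_polyNX size_padeP.
Qed.

Lemma size_sqnorm_padeQ n m : (size (sqnorm_poly (padeQ n m)) <= (2 * m).+1)%N.
Proof.
apply: leq_trans (size_polyMleq _ _) _.
by rewrite /padeQ !size_comp_polyNX size_padeP; lia.
Qed.

Lemma pade_defect_coef_neq0 n m : (m < n)%N -> (pade_defect n m)`_(2 * n) != 0.
Proof.
move=> hmn; rewrite coefB [X in _ - X]nth_default ?subr0; last first.
  by apply: leq_trans (size_sqnorm_padeQ n m) _; lia.
have -> : (sqnorm_poly (padeP n m))`_(2 * n) = lead_coef (sqnorm_poly (padeP n m)).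
  by rewrite lead_coefE size_sqnorm_padeP.
by rewrite lead_coef_eq0 -size_poly_eq0 size_sqnorm_padeP.
Qed.

Lemma pade_defect_monomial n m : (m <= n)%N -> (n <= m + 2)%N ->
  pade_defect n m = (pade_defect n m)`_(2 * n) *: 'X^(2 * n).
Proof.
move=> hmn hnm; apply: even_dvdp_Xn_monomial.
- by rewrite /pade_defect comp_polyB !sqnorm_poly_even.
- rewrite /pade_defect; apply: leq_trans (size_add _ _) _.
  rewrite size_opp geq_max size_sqnorm_padeP leqnn.
  by apply: leq_trans (size_sqnorm_padeQ n m) _; lia.
- by apply: dvdp_trans (dvdp_pade_defect n m); apply: dvdp_exp2l; lia.
Qed.

End PadeApproximant.

Local Open Scope complex_scope.

Definition complex_of_Cx (z : Cx) : R[i] := z.1 +i* z.2.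

Lemma complex_of_Cadd z w : complex_of_Cx (Cadd z w) = complex_of_Cx z + complex_of_Cx w.
Proof. by case: z w => [a b] [c d]. Qed.

Lemma complex_of_Cmul z w : complex_of_Cx (Cmul z w) = complex_of_Cx z * complex_of_Cx w.
Proof. by case: z w => [a b] [c d]. Qed.

Lemma complex_of_Cneg z : complex_of_Cx (Cneg z) = - complex_of_Cx z.
Proof. by case: z. Qed.

Lemma complex_of_Cscale a z : complex_of_Cx (Cscale a z) = a%:C * complex_of_Cx z.
Proof.
case: z => b c; rewrite /complex_of_Cx /Cscale /= -[(_ +i* _) * (_ +i* _)]/(_ +i* _).
by rewrite !mul0r subr0 addr0.
Qed.

Lemma complex_of_Cpow z k : complex_of_Cx (Cpow z k) = complex_of_Cx z ^+ k.
Proof. by elim: k => [|k IH] //=; rewrite complex_of_Cmul IH exprS. Qed.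

Lemma complex_of_Csum f N : complex_of_Cx (Csum f N) = \sum_(k < N.+1) complex_of_Cx (f k).
Proof.
by elim: N => [|N IH] /=; rewrite ?big_ord1 // complex_of_Cadd IH [RHS]big_ord_recr.
Qed.

Lemma Cnormsq_complex z : (Cnormsq z)%:C = complex_of_Cx z * conjc (complex_of_Cx z).
Proof.
case: z => a b; rewrite /Cnormsq /complex_of_Cx /= -[(_ +i* _) * (_ +i* _)]/(_ +i* _).
by congr (_ +i* _); rewrite ?RealsE; ring.
Qed.

Lemma Pnm_coef n m k : (k <= n)%N ->
  INR (Factorial.fact m) / INR (Factorial.fact (n + m))
    * (Binomial.C n k * (INR (Factorial.fact (m + k)) / INR (Factorial.fact m)))
  = pade_coef R n m (n - k).
Proof.
move=> hk; rewrite /Binomial.C !RealsE /pade_coef ?minusE.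
rewrite (_ : (n + m - (n - k) = m + k)%N); last by lia.
rewrite -(@bin_fact (m + k) m) ?leq_addr // -(@bin_fact (n + m) n) ?leq_addr // !addKn !natrM.
by field; rewrite !natr_fact_neq0 !natr_bin_neq0 ?leq_addr ?leq_addl.
Qed.

Lemma Pnm_horner n m s :
  complex_of_Cx (Pnm n m s) = (map_poly (real_complex R) (padeP R n m)).[complex_of_Cx s].
Proof.
rewrite /Pnm complex_of_Cscale complex_of_Csum.
rewrite (@horner_coef_wide _ n.+1); last by rewrite size_map_poly size_padeP.
rewrite (reindex_inj rev_ord_inj) /= mulr_sumr; apply: eq_bigr => -[k hk] _ /=.
rewrite coef_map /= coef_padeP; last by lia.
rewrite complex_of_Cscale complex_of_Cpow mulrA -rmorphM Pnm_coef; last by lia.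
have -> : (n - (n.+1 - k.+1))%coq_nat = k by lia.
by have -> : (n - (n.+1 - k.+1))%N = k by lia.
Qed.

Lemma Qnm_Pnm n m s : Qnm n m s = Pnm m n (Cneg s).
Proof. by rewrite /Qnm /Pnm Nat.add_comm. Qed.

Lemma Qnm_horner n m s :
  complex_of_Cx (Qnm n m s) = (map_poly (real_complex R) (padeQ R n m)).[complex_of_Cx s].
Proof.
by rewrite Qnm_Pnm Pnm_horner complex_of_Cneg /padeQ map_comp_polyNX horner_comp_polyNX.
Qed.

Lemma conjc_horner_real (p : {poly R}) x :
  conjc ((map_poly (real_complex R) p).[x]) = (map_poly (real_complex R) p).[conjc x].
Proof.
rewrite -horner_map /=; congr (_.[_]); apply/polyP => i.
by rewrite !coef_map /= oppr0.
Qed.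

Lemma sqnorm_horner_imaginary (p : {poly R}) w :
  (map_poly (real_complex R) p).[0 +i* w] * conjc ((map_poly (real_complex R) p).[0 +i* w])
  = ((even_poly (sqnorm_poly p)).[- w ^+ 2])%:C.
Proof.
rewrite conjc_horner_real (_ : conjc (0 +i* w) = - (0 +i* w)); last first.
  by rewrite -[- (_ +i* _)]/(- 0 +i* - w) oppr0.
rewrite -horner_comp_polyNX -map_comp_polyNX -hornerM -rmorphM.
rewrite /= -/(sqnorm_poly p) -{1}(even_poly_comp_Xn2 (sqnorm_poly_even p)).
rewrite map_comp_poly horner_comp.
rewrite rmorphXn /= map_polyX hornerXn.
have -> : (0 +i* w) ^+ 2 = (- w ^+ 2)%:C.
  by rewrite !expr2 -[(_ +i* _) * (_ +i* _)]/(_ +i* _) !mul0r mulr0 sub0r addr0.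
by rewrite horner_map.
Qed.

Lemma even_polyXn_double (K : nzSemiRingType) k : even_poly ('X^(2 * k) : {poly K}) = 'X^k.
Proof. by apply/polyP => i; rewrite coef_even_poly !coefXn -mul2n eqn_pmul2l. Qed.

Section ImaginaryAxis.
Variable w : R.

Lemma Cnormsq_Pnm n m :
  Cnormsq (Pnm n m (jw w)) = (even_poly (sqnorm_poly (padeP R n m))).[- w ^+ 2].
Proof. by apply: complexI; rewrite Cnormsq_complex Pnm_horner sqnorm_horner_imaginary. Qed.

Lemma Cnormsq_Qnm n m :
  Cnormsq (Qnm n m (jw w)) = (even_poly (sqnorm_poly (padeQ R n m))).[- w ^+ 2].
Proof. by apply: complexI; rewrite Cnormsq_complex Qnm_horner sqnorm_horner_imaginary. Qed.

Lemma pade_amp2_rational n m : (m <= n)%N -> (n <= m + 2)%N ->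
  let g := even_poly (sqnorm_poly (padeP R n m)) in
  let u := (pade_defect R n m)`_(2 * n) * (- w ^+ 2) ^+ n in
  pade_amp2 n m w = (g.[- w ^+ 2] - u) / g.[- w ^+ 2].
Proof.
move=> hmn hnm g u; rewrite /pade_amp2 RdivE Cnormsq_Pnm Cnormsq_Qnm; congr (_ / _).
suff <- : g.[- w ^+ 2] - (even_poly (sqnorm_poly (padeQ R n m))).[- w ^+ 2] = u.
  by rewrite opprB addrC subrK.
rewrite -hornerN -hornerD.
rewrite (_ : _ - _ = even_poly (pade_defect R n m)); last by rewrite raddfB.
by rewrite /u {1}pade_defect_monomial // even_polyZ even_polyXn_double hornerZ hornerXn.
Qed.

End ImaginaryAxis.

Lemma norm_horner_sub_coef0 (F : numDomainType) (p : {poly F}) x : `|x| <= 1 ->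
  `|p.[x] - p`_0| <= (\sum_(i < size p) `|p`_i|) * `|x|.
Proof.
move=> hx; have [->|p0] := eqVneq p 0.
  by rewrite horner0 coef0 subr0 normr0 mulr_ge0 ?sumr_ge0.
rewrite horner_coef; move: p0; rewrite -size_poly_gt0; case: (size p) => // s _.
rewrite !big_ord_recl /= expr0 mulr1 addrAC subrr add0r mulrDl.
apply: le_trans (ler_norm_sum _ _ _) _; apply: ler_wpDl; first exact: mulr_ge0.
rewrite mulr_suml; apply: ler_sum => i _; rewrite normrM normrX ler_wpM2l //.
by rewrite exprS ler_piMr // exprn_ile1.
Qed.

Lemma div_sub_expansion (F : realFieldType) (B u : F) : 2^-1 <= B ->
  `|(B - u) / B - 1 + u| <= 2 * `|u| * `|B - 1|.
Proof.
move=> hB; have B0 : 0 < B by apply: lt_le_trans hB; rewrite invr_gt0.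
rewrite (_ : _ - 1 + u = u * (B - 1) / B); last by field; rewrite gt_eqF.
rewrite normrM normfV (gtr0_norm B0) ler_pdivrMr // normrM.
have := mulr_ge0 (normr_ge0 u) (normr_ge0 (B - 1)); nra.
Qed.

Lemma ratio_expansion_near0 (F : realFieldType) (g : {poly F}) (d : F) k : g`_0 = 1 ->
  exists2 delta, 0 < delta & forall x, `|x| < delta ->
    `|(g.[x] - d * x ^+ k) / g.[x] - 1 + d * x ^+ k|
      <= 2 * `|d| * (\sum_(i < size g) `|g`_i|) * `|x| ^+ k.+1.
Proof.
set L := \sum_(i < size g) _ => g0; have L0 : 0 <= L by apply: sumr_ge0.
have e0 : 0 < (2 * L + 2)^-1 by rewrite invr_gt0; lra.
have e1 : (2 * L + 2)^-1 * (2 * L + 2) = 1 by rewrite mulVf // gt_eqF //; lra.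
exists (2 * L + 2)^-1 => // x hx.
have x1 : `|x| <= 1 by nra.
have hg := norm_horner_sub_coef0 g x1; rewrite g0 -/L in hg.
have hB : 2^-1 <= g.[x] by move: hg; rewrite ler_norml => /andP[+ _]; nra.
apply: le_trans (div_sub_expansion _ hB) _.
rewrite normrM normrX exprSr -!mulrA; do 2 apply: ler_wpM2l => //.
by rewrite mulrCA; apply: ler_wpM2l; rewrite ?exprn_ge0.
Qed.

Theorem theorem5 (n m : nat)
  (hnm : (m + 1 = n)%nat \/ (m + 2 = n)%nat) :
  maximally_flat_of_order (pade_amp2 n m) n.
Proof.
have hmn : (m < n)%N by case: hnm; lia.
have hnm2 : (n <= m + 2)%N by case: hnm => <-; lia.
set g := even_poly (sqnorm_poly (padeP R n m)).
set d := (pade_defect R n m)`_(2 * n).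
have g0 : g`_0 = 1 by rewrite coef_even_poly coef0_sqnorm_poly coef_padeP // pade_coef0 expr1n.
have [delta delta0 hdelta] := ratio_expansion_near0 d n g0.
exists (- (d * (-1) ^+ n)); split.
  by apply/eqP; rewrite oppr_eq0 mulf_eq0 signr_eq0 orbF pade_defect_coef_neq0.
exists (2 * `|d| * \sum_(i < size g) `|g`_i|), (Num.min 1 delta).
split=> [|w]; first by apply/RltP; rewrite lt_min ltr01.
move=> /RltP; rewrite RabsE lt_min => /andP[w1 wdelta]; apply/RleP.
have hx : `|- w ^+ 2| < delta by rewrite normrN normrX; have := normr_ge0 w; nra.
rewrite !RealsE (pade_amp2_rational _ (ltnW hmn) hnm2) -/g -/d.
rewrite (_ : ((2 * n)%coq_nat + 2)%coq_nat = 2 * n.+1)%N; last by lia.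
rewrite (_ : (2 * n)%coq_nat = (2 * n)%N) //.
have -> : - (d * (-1) ^+ n) * w ^+ (2 * n) = - (d * (- w ^+ 2) ^+ n).
  by rewrite [(- w ^+ 2) ^+ n]exprNn exprM mulNr mulrA.
have -> : `|w| ^+ (2 * n.+1) = `|- w ^+ 2| ^+ n.+1 by rewrite normrN normrX exprM.
by rewrite opprK; apply: hdelta.
Qed.
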